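(* Suppose Assumptions 1 and 2 hold, $J_0\ne\emptyset$, $0<\delta<1$, and Condition (L) holds for all $j=1,\dots,q$ with a constant $c'\in(0,1)$ satisfying Condition (C). Let $J\subseteq\{1,\dots,q\}$ with $|J|\le q^*$ and $J_0\setminus J\ne\emptyset$, and let $l=|J_0\setminus J|$. On the event $\mathcal E_{\delta,J\cup J_0}\cap\mathcal A$, $$\|\hat\Pi_{J_0}f\|_n^2-\|\hat\Pi_Jf\|_n^2\ge\frac12\frac{(1-\delta)^2}{1+\delta}(1-\rho_{q^*}^2)\kappa_l.$$
   Context: Let $q\ge1$ and let $(Y,X)$ be a pair of random variables with $X=(X_1,\dots,X_q)^T$, each $X_j$ real-valued, and $Y=\sum_{j=1}^q f_j(X_j)+\epsilon$, where $f_j\in L^2(\mathbb P^{X_j})$, $\mathbb E[f_j(X_j)]=0$ for $j=1,\dots,q-1$, and $\epsilon$ is a centered Gaussian variable with variance $\sigma^2$, independent of $X$. Write $f(x)=\sum_{j=1}^qf_j(x_j)$. The space $L^2(\mathbb P^X)$ carries the inner product $\langle g,h\rangle=\mathbb E[g(X)h(X)]$ and norm $\|g\|=\langle g,g\rangle^{1/2}$. Let $H_q=L^2(\mathbb P^{X_q})$ and $H_j=\{h\in L^2(\mathbb P^{X_j}):\mathbb E[h(X_j)]=0\}$ for $j<q$, viewed as subspaces of $L^2(\mathbb P^X)$ via $x\mapsto h(x_j)$; for $J\subseteq\{1,\dots,q\}$ let $H_J=\sum_{j\in J}H_j$ (with $H_\emptyset=\{0\}$). Let $J_0=\{j:\|f_j\|>0\}$,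 $s=|J_0|$, and let $q^*$ be an integer with $s\le q^*$. Let $\rho_{q^*}$ be the supremum of $\langle h_1,h_2\rangle/(\|h_1\|\|h_2\|)$ over all nonzero $h_1\in H_{J_1}$, $h_2\in H_{J_2}$ and all $J_1,J_2\subseteq\{1,\dots,q\}$ with $J_1\cap J_2=\emptyset$ and $|J_1|,|J_2|\le q^*$. Assumption 1 is the condition $\rho_{q^*}<1$. $\kappa=\min_{\emptyset\neq J\subseteq J_0}\|\sum_{j\in J}f_j\|^2$ and, for $1\le l\le s$, $\kappa_l=\min_{J'\subseteq J_0,|J'|=l}\|\sum_{j\in J'}f_j\|^2$. $\epsilon'_{q^*}$ is a positive number such that $\|\sum_{j\in J}g_j\|^2\le(1+\epsilon'_{q^*})\sum_{j\in J}\|g_j\|^2$ for all $J$ with $|J|\le q^*$ and all $g_j\in H_j$. Assumption 2: each $X_j$ takes values in $[0,1]$ and has a density $p_j$ with respect to Lebesgue measure with $c\le p_j\le 1/c$ for a constant $c>0$, and $f_j\in\tilde W_j(\alpha_j,K_j)=\{\sum_{k\ge1}\theta_k\phi_k:\sum_{k\ge1}(2\pi k)^{2\alpha_j}(\theta_{2k}^2+\theta_{2k+1}^2)\le K_j^2\}$ with $\alpha_j>1/2$, $K_j>0$, where $\phi_1=1$, $\phi_{2k}(x)=\sqrt2\cos(2\pi kx)$, $\phi_{2k+1}(x)=\sqrt2\sin(2\pi kx)$, $k\ge1$, on $[0,1]$. Given integers $m_j\ge1$, $V_j$ is the intersection of $H_j$ with the linear span of $\phi_1(x_j),\dots,\phi_{m_j}(x_j)$;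 $V_J=\sum_{j\in J}V_j$, $d_J=\dim V_J$, $d_l=\max_{|J|=l}d_J$; $\Pi_{V_j}$ is the orthogonal projection of $L^2(\mathbb P^X)$ onto $V_j$. $C_j>0$ denotes a constant depending only on $\alpha_j$ and $c$ such that $\|h-\Pi_{V_j}h\|^2\le C_jK_j^2m_j^{-2\alpha_j}$ and $\|h-\Pi_{V_j}h\|_\infty^2\le C_jK_j^2m_j^{1-2\alpha_j}$ for all $h\in\tilde W_j(\alpha_j,K_j)\cap H_j$ and all $m_j\ge1$. Condition (L): $m_j\ge\big(C_jK_j^2q^*(1+\epsilon'_{q^*})/(c'(1-\rho_{q^*}^2)\kappa)\big)^{1/(2\alpha_j)}$, where $c'\in(0,1)$ is a constant. Condition (C): $\frac23(1-\sqrt{c'})^2-8\frac{1+\delta}{(1-\delta)^2}c'\ge\frac12$. $X^1,\dots,X^n$ are independent copies of $X$. The empirical norm is $\|h\|_n^2=\frac1n\sum_{i=1}^nh(X^i)^2$ for functions and $\|u\|_n^2=\frac1n\|u\|_2^2$ for $u\in\mathbb R^n$. $\hat\Pi_J$ is the orthogonal projection of $\mathbb R^n$ onto $\{(g(X^1),\dots,g(X^n))^T:g\in V_J\}$, and for a function $h$ we write $\hat\Pi_Jh=\hat\Pi_J(h(X^1),\dots,h(X^n))^T$. For $0<\delta<1$ and $J\subseteq\{1,\dots,q\}$, $\mathcal E_{\delta,J}$ is the event that $(1-\delta)\|g\|^2\le\|g\|_n^2\le(1+\delta)\|g\|^2$ for all $g\in V_J$. $\mathcal A=\{\|f-\sum_{j\in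 J_0}\Pi_{V_j}f_j\|_n^2\le2c'(1-\rho_{q^*}^2)\kappa\}$. *)

From HB Require Import structures.
From mathcomp Require Import all_boot all_order all_algebra.
From mathcomp Require Import all_classical all_reals all_analysis.
Set Implicit Arguments. Unset Strict Implicit. Unset Printing Implicit Defensive.
Import Order.TTheory GRing.Theory Num.Theory.
Import numFieldNormedType.Exports.
Local Open Scope ring_scope.

(* Trigonometric basis on [0,1]:  phi 1 = 1, phi (2k) = sqrt 2 cos(2 pi k x),
   phi (2k+1) = sqrt 2 sin (2 pi k x) (k >= 1).  phi 0 is a dummy (= 0). *)
Definition phi {R : realType} (k : nat) (x : R) : R :=
  if k == 0%N then 0
  else if k == 1%N then 1
  else if ~~ odd k then Num.sqrt 2 * cos (2 * pi * (k./2)%:R * x)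
  else Num.sqrt 2 * sin (2 * pi * (k./2)%:R * x).

Definition Wtilde {R : realType} (alpha K : R) (h : R -> R) : Prop :=
  exists theta : nat -> R,
    (forall x : R, 0 <= x <= 1 ->
        (series (fun k => theta k * phi k x) @ \oo --> h x)%classic) /\
    (\sum_(1 <= k <oo)
        (((2 * pi * k%:R) `^ (2 * alpha) *
          (theta (k.*2)%N ^+ 2 + theta (k.*2).+1 ^+ 2))%:E) <= (K ^+ 2)%:E)%E.

Definition I01 {R : realType} : set R := [set x : R | (0 <= x <= 1)%R]%classic.

Section Model.
Context {R : realType} {d : measure_display} {Omega : measurableType d}.
Variable (P : probability Omega R) (q : nat) (X : 'I_q -> Omega -> R).

Definition Xv (w : Omega) : 'I_q -> R := fun j => X j w.

Definition ipX (G H : ('I_q -> R) -> R) : R :=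
  fine (\int[P]_w ((G (Xv w) * H (Xv w))%:E)).
Definition sqn (G : ('I_q -> R) -> R) : R := ipX G G.
Definition nrm (G : ('I_q -> R) -> R) : R := Num.sqrt (sqn G).

Definition liftj (j : 'I_q) (h : R -> R) : ('I_q -> R) -> R := fun x => h (x j).
Definition fsum (h : 'I_q -> R -> R) (J : {set 'I_q}) : ('I_q -> R) -> R :=
  fun x => \sum_(j in J) h j (x j).

(* H_j : L^2(P^{X_j}), centered when j is not the last index (0-based: j+1 < q) *)
Definition inH (j : 'I_q) (h : R -> R) : Prop :=
  measurable_fun [set: R]%classic h /\
  (\int[P]_w (((h (X j w)) ^+ 2)%:E) < +oo)%E /\
  ((j.+1 < q)%N -> fine (\int[P]_w ((h (X j w))%:E)) = 0).

Definition inHJ (J : {set 'I_q}) (G : ('I_q -> R) -> R) : Prop :=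
  exists h : 'I_q -> R -> R, (forall j, j \in J -> inH j (h j)) /\ G = fsum h J.

Definition corr_set (qs : nat) : set R :=
  fun r : R => exists J1 J2 : {set 'I_q}, [disjoint J1 & J2] /\
     (#|J1| <= qs)%N /\ (#|J2| <= qs)%N /\
     exists G1 G2, inHJ J1 G1 /\ inHJ J2 G2 /\ 0 < sqn G1 /\ 0 < sqn G2 /\
       r = ipX G1 G2 / (nrm G1 * nrm G2).

Definition rho (qs : nat) : R := sup (corr_set qs).

Definition J0 (f : 'I_q -> R -> R) : {set 'I_q} := [set j | 0 < sqn (liftj j (f j))]%SET.

Definition kappa (f : 'I_q -> R -> R) : R :=
  inf [set sqn (fsum f J) | J in [set J : {set 'I_q} | J \subset J0 f /\ J != finset.set0]%classic]%classic.
Definition kappa_l (f : 'I_q -> R -> R) (l : nat) : R :=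
  inf [set sqn (fsum f J) | J in [set J : {set 'I_q} | J \subset J0 f /\ #|J| = l]%classic]%classic.

Definition inV (j : 'I_q) (m : nat) (g : R -> R) : Prop :=
  inH j g /\
  exists a : nat -> R, forall x, g x = \sum_(1 <= k < m.+1) a k * phi k x.

Definition inVJ (m : 'I_q -> nat) (J : {set 'I_q}) (G : ('I_q -> R) -> R) : Prop :=
  exists g : 'I_q -> R -> R, (forall j, j \in J -> inV j (m j) (g j)) /\ G = fsum g J.

Definition is_projV (j : 'I_q) (m : nat) (h g : R -> R) : Prop :=
  inV j m g /\
  forall v, inV j m v -> fine (\int[P]_w (((h (X j w) - g (X j w)) * v (X j w))%:E)) = 0.

Section Sample.
Variables (n : nat) (xs : 'I_n -> 'I_q -> R).

Definition esqn (G : ('I_q -> R) -> R) : R := n%:R^-1 * \sum_(i < n) (G (xs i)) ^+ 2.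
Definition vsqn (u : 'I_n -> R) : R := n%:R^-1 * \sum_(i < n) (u i) ^+ 2.

Definition eventE (delta : R) (m : 'I_q -> nat) (J : {set 'I_q}) : Prop :=
  forall G, inVJ m J G -> (1 - delta) * sqn G <= esqn G /\ esqn G <= (1 + delta) * sqn G.

Definition SJ (m : 'I_q -> nat) (J : {set 'I_q}) : set ('I_n -> R) :=
  [set u | exists G, inVJ m J G /\ forall i, u i = G (xs i)]%classic.

Definition is_eproj (S : set ('I_n -> R)) (y u : 'I_n -> R) : Prop :=
  S u /\ forall v, S v -> \sum_(i < n) (y i - u i) * v i = 0.

End Sample.
End Model.

From HB Require Import structures.
From mathcomp Require Import all_boot all_order all_algebra.
From mathcomp Require Import all_classical all_reals all_analysis.
From mathcomp Require Import ring lra measurable_realfun lebesgue_Rintegral.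
Set Implicit Arguments.
Unset Strict Implicit.
Unset Printing Implicit Defensive.

Import Order.TTheory GRing.Theory Num.Theory.
Import numFieldNormedType.Exports.
Local Open Scope ring_scope.

(* By Pythagoras the left-hand side equals |f - Pi_J f|_n^2 - |f - Pi_J0 f|_n^2.
   Put w := sum_{j in J0} Pi_{V_j} f_j, a point of the range of Pi_J0: on A, |f - w|_n^2
   is O(c' (1 - rho^2) kappa), which controls the second term and, through
   |a + b|^2 >= 2/3 |a|^2 - 2 |b|^2, reduces the first one to |w - Pi_J f|_n^2.  The vector
   w - Pi_J f samples some D in V_{J u J0}, so on E_delta its empirical norm is at least
   (1 - delta) |D|^2.  Splitting D = sum_{J0 \ J} Pi_{V_j} f_j - h with h in H_J,
   Assumption 1 gives |D|^2 >= (1 - rho^2) |sum_{J0 \ J} Pi_{V_j} f_j|^2, and Condition (L)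
   keeps the approximation error sum_{J0 \ J} (f_j - Pi_{V_j} f_j) below c' kappa_l in
   norm, so the triangle inequality leaves (1 - sqrt c')^2 kappa_l.  Condition (C) is what
   makes these constants add up to the stated bound. *)


(** * Elementary inequalities *)

Section RealFacts.
Variable R : realType.

Lemma inf_ge0 (E : set R) : (forall x, E x -> 0 <= x) -> 0 <= inf E.
Proof.
move=> E_ge0; have [->|/set0P E0] := eqVneq E set0; first by rewrite inf0.
exact: lb_le_inf E0 E_ge0.
Qed.

Lemma powR_threshold (b x e : R) : 0 < e -> 0 < b ->
  b `^ (1 / e) <= x -> 0 < x /\ x `^ (- e) <= b^-1.
Proof.
move=> e0 b0 bx; have x0 : 0 < x := lt_le_trans (powR_gt0 _ b0) bx.
split => //; rewrite powRN lef_pV2 ?posrE ?powR_gt0 //.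
have := @ge0_ler_powR R e (ltW e0) (b `^ (1 / e)) x.
rewrite !nnegrE powR_ge0 ltW // => /(_ isT isT bx).
by rewrite -powRrM mul1r mulVf ?gt_eqF // powRr1 // ltW.
Qed.

Lemma approx_error_le (a t B e s : R) (mm : nat) :
  0 < a -> 0 < t -> 0 < B -> 0 < e -> (a * t / B) `^ (1 / e) <= mm%:R ->
  ((1 <= mm)%N -> s <= a * mm%:R `^ (- e)) -> s <= B / t.
Proof.
move=> a0 t0 B0 e0; have b0 : 0 < a * t / B by rewrite divr_gt0 ?mulr_gt0.
move=> /(powR_threshold e0 b0)[mm0 mm_le] s_le.
have /s_le/le_trans : (1 <= mm)%N by rewrite -(ltr0n R).
apply; apply: le_trans (ler_wpM2l (ltW a0) mm_le) _.
by rewrite le_eqVlt; apply/orP; left; apply/eqP; field; rewrite !gt_eqF.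
Qed.

Lemma sum_uniform_le (I : finType) (A : {set I}) (s : I -> R) (n : nat) (e b : R) :
  (0 < n)%N -> (#|A| <= n)%N -> 0 <= e -> 0 <= b ->
  (forall i, i \in A -> s i <= b / (n%:R * (1 + e))) -> (1 + e) * \sum_(i in A) s i <= b.
Proof.
move=> n0 cA e0 b0 s_le; have n0' : 0 < n%:R :> R by rewrite ltr0n.
apply: le_trans (ler_wpM2l _ (ler_sum _ s_le)) _; first lra.
rewrite sumr_const -[_ *+ #|A|]mulr_natl.
have -> : (1 + e) * (#|A|%:R * (b / (n%:R * (1 + e)))) = b * (#|A|%:R / n%:R).
  by field; rewrite !gt_eqF //; lra.
by rewrite ler_piMr // ler_pdivrMr // mul1r ler_nat.
Qed.

Lemma conditionC_gap (delta c' : R) : 0 < delta < 1 -> 0 < c' ->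
  1 / 2 <= 2 / 3 * (1 - Num.sqrt c') ^+ 2 - 8 * ((1 + delta) / (1 - delta) ^+ 2) * c' ->
  1 / 2 * ((1 - delta) ^+ 2 / (1 + delta))
    <= 2 / 3 * (1 - delta) * (1 - Num.sqrt c') ^+ 2 - 6 * c'.
Proof.
move=> /andP[d0 d1] c0; set t := (1 - Num.sqrt c') ^+ 2; set k := (1 - delta) ^+ 2 / (1 + delta).
have t0 : 0 <= t by rewrite sqr_ge0.
have k0 : 0 < k by rewrite divr_gt0 ?exprn_gt0 //; lra.
have k1 : k <= 1 - delta by rewrite ler_pdivrMr ?expr2; nra.
have -> : (1 + delta) / (1 - delta) ^+ 2 = k^-1 by rewrite invf_div.
move/(ler_wpM2l (ltW k0)); rewrite mulrBr.
have -> : k * (8 * k^-1 * c') = 8 * c' by field; rewrite gt_eqF.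
nra.
Qed.

Lemma conditionC_bound (delta c' r kap kl A Dn Yw : R) :
  0 < delta < 1 -> 0 < c' -> 0 < r -> 0 <= kap <= kl ->
  1 / 2 <= 2 / 3 * (1 - Num.sqrt c') ^+ 2 - 8 * ((1 + delta) / (1 - delta) ^+ 2) * c' ->
  (1 - Num.sqrt c') ^+ 2 * kl <= A -> (1 - delta) * (r * A) <= Dn ->
  Yw <= 2 * c' * r * kap ->
  1 / 2 * ((1 - delta) ^+ 2 / (1 + delta)) * r * kl <= 2 / 3 * Dn - 3 * Yw.
Proof.
move=> delta01 c0 r0 /andP[kap0 kap_kl] condC A_ge Dn_ge Yw_le.
have d1 : 0 <= 1 - delta by case/andP: delta01 => _ d1; rewrite subr_ge0 ltW.
have rkl0 := mulr_ge0 (ltW r0) (le_trans kap0 kap_kl).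
have := ler_wpM2r rkl0 (conditionC_gap delta01 c0 condC).
have : (1 - delta) * (r * ((1 - Num.sqrt c') ^+ 2 * kl)) <= Dn.
  by apply: le_trans Dn_ge; apply/ler_wpM2l/ler_wpM2l => //; exact: ltW.
have : c' * r * kap <= c' * r * kl by apply: ler_wpM2l kap_kl; rewrite mulr_ge0 // ltW.
nra.
Qed.

Lemma conditionC_bound_degenerate (delta c' r kap kl Dn Yw : R) :
  0 < delta < 1 -> 0 < c' -> r <= 0 -> 0 <= kap -> 0 <= kl -> 0 <= Dn ->
  Yw <= 2 * c' * r * kap ->
  1 / 2 * ((1 - delta) ^+ 2 / (1 + delta)) * r * kl <= 2 / 3 * Dn - 3 * Yw.
Proof.
move=> /andP[d0 d1] c0 r0 kap0 kl0 Dn0 Yw_le.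
have kk0 : 0 <= (1 - delta) ^+ 2 / (1 + delta) by rewrite divr_ge0 ?sqr_ge0 //; lra.
have nr : 0 <= - r by rewrite oppr_ge0.
have := mulr_ge0 (ltW c0) (mulr_ge0 nr kap0).
have := mulr_ge0 kk0 (mulr_ge0 nr kl0).
nra.
Qed.

End RealFacts.

(** * Square-integrable random variables *)

Section SquareIntegrable.
Context {R : realType} {d : measure_display} {Omega : measurableType d}.
Variable P : probability Omega R.

Definition sq_integrable (f : Omega -> R) :=
  measurable_fun [set: Omega]%classic f /\
  P.-integrable [set: Omega]%classic (EFin \o (fun w => f w * f w)).

Lemma integrableZl_EFin (f : Omega -> R) k :
  P.-integrable [set: Omega]%classic (EFin \o f) ->
  P.-integrable [set: Omega]%classic (EFin \o (fun w => k * f w)).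
Proof.
move=> h; apply: (eq_integrable measurableT _ _ _ (integrableZl measurableT k h)).
by move=> x _ /=; rewrite EFinM.
Qed.

Lemma integrableD_EFin (f g : Omega -> R) :
  P.-integrable [set: Omega]%classic (EFin \o f) ->
  P.-integrable [set: Omega]%classic (EFin \o g) ->
  P.-integrable [set: Omega]%classic (EFin \o (fun w => f w + g w)).
Proof. by move=> hf hg; apply: (eq_integrable measurableT _ _ _ (integrableD measurableT hf hg)). Qed.

Lemma sq_integrable_mul f g : sq_integrable f -> sq_integrable g ->
  P.-integrable [set: Omega]%classic (EFin \o (fun w => f w * g w)).
Proof.
move=> [mf If] [mg Ig].
apply: (le_integrable measurableT); last exact: integrableD_EFin If Ig.
  by apply/measurable_EFinP; apply: measurable_funM.
move=> x _ /=; rewrite lee_fin [X in _ <= X]ger0_norm -?expr2 ?addr_ge0 ?sqr_ge0//.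
have := sqr_ge0 (f x - g x); have := sqr_ge0 (f x + g x).
by case: (lerP 0 (f x * g x)) => h; [rewrite ger0_norm|rewrite ltr0_norm]; nra.
Qed.

Lemma sq_integrable_integrable f : sq_integrable f ->
  P.-integrable [set: Omega]%classic (EFin \o f).
Proof.
move=> Lf; have := sq_integrable_mul Lf (conj (@measurable_cst _ _ _ _ _ (1 : R))
  (finite_measure_integrable_cst P (1 * 1) measurableT)).
by apply: (eq_integrable measurableT) => x _ /=; rewrite mulr1.
Qed.

Lemma sq_integrable_lin f g a b : sq_integrable f -> sq_integrable g ->
  sq_integrable (fun w => a * f w + b * g w).
Proof.
move=> Lf Lg; have Ifg := sq_integrable_mul Lf Lg.
case: Lf Lg => mf If [mg Ig]; split.
  by apply: measurable_funD; apply: measurable_funM.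
have := integrableD_EFin (integrableZl_EFin (a * a) If)
  (integrableD_EFin (integrableZl_EFin (2 * a * b) Ifg) (integrableZl_EFin (b * b) Ig)).
by apply: (eq_integrable measurableT) => x _ /=; congr EFin; ring.
Qed.

Lemma sq_integrable0 : sq_integrable (fun => 0).
Proof.
split; first exact: measurable_cst.
have := finite_measure_integrable_cst P 0 measurableT.
by apply: (eq_integrable measurableT) => x _ /=; rewrite mulr0.
Qed.

Lemma sq_integrable_sum (I : Type) (s : seq I) (Q : pred I) (F : I -> Omega -> R) :
  (forall i, Q i -> sq_integrable (F i)) ->
  sq_integrable (fun w => \sum_(i <- s | Q i) F i w).
Proof.
move=> LF; elim: s => [|i s IHs].
  by under eq_fun do rewrite big_nil; exact: sq_integrable0.
under eq_fun do rewrite big_cons.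
case: (boolP (Q i)) => // Qi.
by have := sq_integrable_lin 1 1 (LF i Qi) IHs; under eq_fun do rewrite !mul1r.
Qed.

Lemma sq_integrableP f : sq_integrable f <->
  measurable_fun [set: Omega]%classic f /\ (\int[P]_w ((f w ^+ 2)%:E) < +oo)%E.
Proof.
have sqE : (\int[P]_w `|((f w * f w)%R)%:E| = \int[P]_w ((f w ^+ 2)%R)%:E)%E.
  by apply: eq_integral => x _ /=; rewrite -expr2 ger0_norm // sqr_ge0.
split=> [[mf /integrableP [_]]|[mf fin]]; first by rewrite sqE.
split => //; apply/integrableP; split; last by rewrite sqE.
by apply/measurable_EFinP; apply: measurable_funM.
Qed.

Lemma Rintegral_sqr_ge0 f : 0 <= \int[P]_w (f w * f w).
Proof. by apply: Rintegral_ge0 => x _; rewrite -expr2 sqr_ge0. Qed.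

Lemma Rintegral_sqr_lin f g a b : sq_integrable f -> sq_integrable g ->
  \int[P]_w ((a * f w + b * g w) * (a * f w + b * g w)) =
  a * a * \int[P]_w (f w * f w) + 2 * a * b * \int[P]_w (f w * g w)
  + b * b * \int[P]_w (g w * g w).
Proof.
move=> Lf Lg; have Ifg := sq_integrable_mul Lf Lg.
case: Lf Lg => _ If [_ Ig].
rewrite (@eq_Rintegral _ _ _ P _ (fun w => a * a * (f w * f w) +
   (2 * a * b * (f w * g w) + b * b * (g w * g w)))); last by move=> x _; ring.
rewrite RintegralD //; last 2 first.
- exact: integrableZl_EFin.
- by apply: integrableD_EFin; apply: integrableZl_EFin.
rewrite RintegralD //; try exact: integrableZl_EFin.
by rewrite !RintegralZl // addrA.
Qed.

Lemma Rintegral_Cauchy_Schwarz f g : sq_integrable f -> sq_integrable g ->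
  (\int[P]_w (f w * g w)) ^+ 2 <= \int[P]_w (f w * f w) * \int[P]_w (g w * g w).
Proof.
move=> Lf Lg.
set A := \int[P]_w (f w * f w); set B := \int[P]_w (g w * g w).
set C := \int[P]_w (f w * g w).
have discr t : 0 <= A - 2 * t * C + t * t * B.
  have := Rintegral_sqr_ge0 (fun w => 1 * f w + (- t) * g w).
  by rewrite Rintegral_sqr_lin // -/A -/B -/C; nra.
have A0 : 0 <= A := Rintegral_sqr_ge0 f.
have [B0|Bn0] := eqVneq B 0.
  have [->|Cn0] := eqVneq C 0; first by rewrite B0 mulr0 expr0n.
  have := discr ((A + 1) / (2 * C)); rewrite B0 mulr0 addr0.
  have -> : 2 * ((A + 1) / (2 * C)) * C = A + 1 by field.
  lra.
have Bgt0 : 0 < B by rewrite lt_def Bn0 Rintegral_sqr_ge0.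
have := discr (C / B).
have -> : A - 2 * (C / B) * C + C / B * (C / B) * B = A - C * C / B.
  by field; rewrite gt_eqF.
by rewrite subr_ge0 ler_pdivrMr // expr2.
Qed.

End SquareIntegrable.

(** * The additive model in L^2(P^X) *)

Section Model.
Context {R : realType} {d : measure_display} {Omega : measurableType d}.
Variables (P : probability Omega R) (q : nat) (X : 'I_q -> Omega -> R).
Hypothesis mX : forall j, measurable_fun [set: Omega]%classic (X j).
Implicit Types (S J : {set 'I_q}) (G A B H : ('I_q -> R) -> R).

Definition in_L2 (G : ('I_q -> R) -> R) := sq_integrable P (fun w => G (Xv X w)).

Lemma sqn_ge0 G : 0 <= sqn P X G.
Proof. exact: Rintegral_sqr_ge0. Qed.

Lemma nrm_ge0 G : 0 <= nrm P X G.
Proof. exact: sqrtr_ge0. Qed.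

Lemma sqr_nrm G : nrm P X G ^+ 2 = sqn P X G.
Proof. exact/sqr_sqrtr/sqn_ge0. Qed.

Lemma sqn_lin G1 G2 a b : in_L2 G1 -> in_L2 G2 ->
  sqn P X (fun x => a * G1 x + b * G2 x) =
  a * a * sqn P X G1 + 2 * a * b * ipX P X G1 G2 + b * b * sqn P X G2.
Proof. exact: Rintegral_sqr_lin. Qed.

Lemma normr_ipX_le G1 G2 : in_L2 G1 -> in_L2 G2 ->
  `|ipX P X G1 G2| <= nrm P X G1 * nrm P X G2.
Proof.
move=> L1 L2; rewrite /nrm -sqrtrM ?sqn_ge0 // -sqrtr_sqr ler_sqrt ?mulr_ge0 ?sqn_ge0 //.
exact: Rintegral_Cauchy_Schwarz.
Qed.

Lemma nrm_addr_le G1 G2 : in_L2 G1 -> in_L2 G2 ->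
  nrm P X (fun x => G1 x + G2 x) <= nrm P X G1 + nrm P X G2.
Proof.
move=> L1 L2; rewrite -ler_sqr ?nnegrE ?addr_ge0 ?nrm_ge0 // sqr_nrm.
have -> : (fun x => G1 x + G2 x) = (fun x => 1 * G1 x + 1 * G2 x).
  by apply: funext => x; rewrite !mul1r.
rewrite sqn_lin // -!sqr_nrm.
have := ler_norm (ipX P X G1 G2); have := normr_ipX_le L1 L2; nra.
Qed.

Lemma sqn_addr_small_ge A E k c : in_L2 A -> in_L2 E -> 0 <= k -> 0 <= c <= 1 ->
  k <= sqn P X (fun x => A x + E x) -> sqn P X E <= c * k ->
  (1 - Num.sqrt c) ^+ 2 * k <= sqn P X A.
Proof.
move=> LA LE k0 /andP[c0 c1] kAE Eck.
have nAE : Num.sqrt k <= nrm P X (fun x => A x + E x) by rewrite ler_sqrt ?sqn_ge0.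
have nE : nrm P X E <= Num.sqrt c * Num.sqrt k by rewrite -sqrtrM // ler_sqrt ?mulr_ge0.
have s1 : Num.sqrt c <= 1 by rewrite -sqrtr1 ler_sqrt.
have gap : (1 - Num.sqrt c) * Num.sqrt k <= nrm P X A.
  by have := nrm_addr_le LA LE; rewrite mulrBl mul1r; lra.
rewrite -sqr_nrm -[k](sqr_sqrtr k0) -exprMn ler_sqr ?nnegrE ?nrm_ge0 //.
by rewrite mulr_ge0 ?sqrtr_ge0 ?subr_ge0.
Qed.

Lemma inH_sq_integrable j h : inH P X j h -> sq_integrable P (fun w => h (X j w)).
Proof. by case=> mh [hfin _]; apply/sq_integrableP; split => //; exact: measurableT_comp. Qed.

Lemma inH0 j : inH P X j (fun => 0).
Proof.
split; first exact: measurable_cst.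
by split=> [|_]; rewrite ?expr0n /= integral0.
Qed.

Lemma inH_lin j h1 h2 a b : inH P X j h1 -> inH P X j h2 ->
  inH P X j (fun x => a * h1 x + b * h2 x).
Proof.
move=> H1 H2; have L1 := inH_sq_integrable H1; have L2 := inH_sq_integrable H2.
have I1 := sq_integrable_integrable L1; have I2 := sq_integrable_integrable L2.
have /sq_integrableP[_ fin] := sq_integrable_lin a b L1 L2.
case: H1 H2 => m1 [_ c1] [m2 [_ c2]].
split; first by apply: measurable_funD; apply: measurable_funM.
split=> // jq.
have c1' : \int[P]_w h1 (X j w) = 0 := c1 jq.
have c2' : \int[P]_w h2 (X j w) = 0 := c2 jq.
change (\int[P]_w (a * h1 (X j w) + b * h2 (X j w)) = 0).
rewrite RintegralD //; try exact: integrableZl_EFin.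
by rewrite !RintegralZl // c1' c2' !mulr0 addr0.
Qed.

Lemma inH_sub j h1 h2 : inH P X j h1 -> inH P X j h2 -> inH P X j (fun x => h1 x - h2 x).
Proof.
have -> : (fun x => h1 x - h2 x) = (fun x => 1 * h1 x + (-1) * h2 x).
  by apply: funext => x; ring.
exact: inH_lin.
Qed.

Lemma inH_opp j h : inH P X j h -> inH P X j (fun x => - h x).
Proof.
have -> : (fun x => - h x) = (fun x => 0 * h x + (-1) * h x) by apply: funext => x; ring.
by move=> Hh; apply: inH_lin.
Qed.

Lemma inV0 j mm : inV P X j mm (fun => 0).
Proof.
split; first exact: inH0.
by exists (fun => 0) => x; rewrite big1 // => k _; rewrite mul0r.
Qed.

Lemma inV_sub j mm g1 g2 : inV P X j mm g1 -> inV P X j mm g2 ->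
  inV P X j mm (fun x => g1 x - g2 x).
Proof.
move=> [H1 [a1 e1]] [H2 [a2 e2]]; split; first exact: inH_sub.
exists (fun k => a1 k - a2 k) => x.
by rewrite e1 e2 -sumrB; apply: eq_bigr => k _; rewrite mulrBl.
Qed.

Lemma in_L2_fsum h J : (forall j, j \in J -> inH P X j (h j)) -> in_L2 (fsum h J).
Proof.
by move=> Hh; rewrite /in_L2 /fsum; apply: sq_integrable_sum => j /Hh/inH_sq_integrable.
Qed.

Lemma inHJ_in_L2 J G : inHJ P X J G -> in_L2 G.
Proof. by case=> h [Hh ->]; exact: in_L2_fsum. Qed.

Lemma fsum_extend0 (h : 'I_q -> R -> R) (J1 J2 : {set 'I_q}) : J1 \subset J2 ->
  fsum (fun j => if j \in J1 then h j else fun => 0) J2 = fsum h J1.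
Proof.
move=> sJ; apply: funext => x; rewrite /fsum [LHS]big_mkcond [RHS]big_mkcond.
apply: eq_bigr => j _; case: (boolP (j \in J1)) => jJ1; case: (boolP (j \in J2)) => //= jJ2.
by rewrite (fintype.subsetP sJ _ jJ1) in jJ2.
Qed.

Lemma inHJ_subset J1 J2 G : J1 \subset J2 -> inHJ P X J1 G -> inHJ P X J2 G.
Proof.
move=> sJ [h [Hh ->]]; exists (fun j => if j \in J1 then h j else fun => 0).
split; last by rewrite fsum_extend0.
by move=> j _; case: ifP => [/Hh|_] //; exact: inH0.
Qed.

Lemma inVJ_subset m J1 J2 G : J1 \subset J2 -> inVJ P X m J1 G -> inVJ P X m J2 G.
Proof.
move=> sJ [g [Hg ->]]; exists (fun j => if j \in J1 then g j else fun => 0).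
split; last by rewrite fsum_extend0.
by move=> j _; case: ifP => [/Hg|_] //; exact: inV0.
Qed.

Lemma inHJ_sub J G1 G2 : inHJ P X J G1 -> inHJ P X J G2 ->
  inHJ P X J (fun x => G1 x - G2 x).
Proof.
move=> [h1 [H1 ->]] [h2 [H2 ->]]; exists (fun j x => h1 j x - h2 j x); split.
  by move=> j jJ; apply: inH_sub; [exact: H1 | exact: H2].
by apply: funext => x; rewrite /fsum -sumrB.
Qed.

Lemma inVJ_sub m J G1 G2 : inVJ P X m J G1 -> inVJ P X m J G2 ->
  inVJ P X m J (fun x => G1 x - G2 x).
Proof.
move=> [g1 [H1 ->]] [g2 [H2 ->]]; exists (fun j x => g1 j x - g2 j x); split.
  by move=> j jJ; apply: inV_sub; [exact: H1 | exact: H2].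
by apply: funext => x; rewrite /fsum -sumrB.
Qed.

Lemma inVJ_inHJ m J G : inVJ P X m J G -> inHJ P X J G.
Proof. by case=> g [Hg ->]; exists g; split => // j /Hg[]. Qed.

Lemma corr_set_ubound qs : has_ubound (corr_set P X qs).
Proof.
exists 1 => _ [J1 [J2 [_ [_ [_ [G1 [G2 [h1 [h2 [p1 [p2 ->]]]]]]]]]]].
have n12 : 0 < nrm P X G1 * nrm P X G2 by rewrite mulr_gt0 // sqrtr_gt0.
rewrite ler_pdivrMr // mul1r; apply: le_trans (ler_norm _) _.
exact: normr_ipX_le (inHJ_in_L2 h1) (inHJ_in_L2 h2).
Qed.

Lemma ipX_le_rho qs J1 J2 A B : [disjoint J1 & J2] ->
  (#|J1| <= qs)%N -> (#|J2| <= qs)%N -> inHJ P X J1 A -> inHJ P X J2 B ->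
  ipX P X A B <= rho P X qs * (nrm P X A * nrm P X B).
Proof.
move=> dJ c1 c2 hA hB; have LA := inHJ_in_L2 hA; have LB := inHJ_in_L2 hB.
have [nAB0|nAB] := eqVneq (nrm P X A * nrm P X B) 0.
  by rewrite nAB0 mulr0; apply: le_trans (ler_norm _) _; rewrite -nAB0 normr_ipX_le.
have [nA nB] : nrm P X A != 0 /\ nrm P X B != 0.
  by split; apply: contraNneq nAB => ->; rewrite (mul0r, mulr0).
have sqn_gt0 G : nrm P X G != 0 -> 0 < sqn P X G.
  by move=> nG; rewrite -sqr_nrm exprn_gt0 // lt_def nG nrm_ge0.
rewrite -ler_pdivrMr ?lt_def ?nAB ?mulr_ge0 ?nrm_ge0 //.
apply: (ub_le_sup (corr_set_ubound qs)).
exists J1, J2; do 3 (split => //); exists A, B; do 2 (split => //).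
by split; [exact: sqn_gt0 | split; [exact: sqn_gt0 |]].
Qed.

Lemma sqn_subr_ge_rho qs J1 J2 A B : [disjoint J1 & J2] ->
  (#|J1| <= qs)%N -> (#|J2| <= qs)%N -> inHJ P X J1 A -> inHJ P X J2 B ->
  (1 - rho P X qs ^+ 2) * sqn P X A <= sqn P X (fun x => A x - B x).
Proof.
move=> dJ c1 c2 hA hB; have ipAB := ipX_le_rho dJ c1 c2 hA hB.
have LA := inHJ_in_L2 hA; have LB := inHJ_in_L2 hB.
have -> : (fun x => A x - B x) = (fun x => 1 * A x + (-1) * B x).
  by apply: funext => x; ring.
rewrite sqn_lin // -!sqr_nrm.
(* the difference of the two sides is at least (nrm B - rho nrm A)^2 *)
have := sqr_ge0 (nrm P X B - rho P X qs * nrm P X A); nra.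
Qed.

Lemma sqn_fsum_subr_ge_rho qs m g S J H : (#|S| <= qs)%N -> (#|J| <= qs)%N ->
  (forall j, j \in S -> inV P X j (m j) (g j)) -> inVJ P X m J H ->
  (1 - rho P X qs ^+ 2) * sqn P X (fsum g (S :\: J))
    <= sqn P X (fun x => fsum g S x - H x).
Proof.
move=> cS cJ Hg HH.
have gH (T : {set 'I_q}) : T \subset S -> inHJ P X T (fsum g T).
  by move=> sT; exists g; split => // j /(fintype.subsetP sT)/Hg[].
have -> : (fun x => fsum g S x - H x) =
    (fun x => fsum g (S :\: J) x - (H x - fsum g (S :&: J) x)).
  by apply: funext => x; rewrite /fsum (big_setID J) /=; ring.
apply: sqn_subr_ge_rho (gH _ (subsetDl S J))
  (inHJ_sub (inVJ_inHJ HH) (inHJ_subset (subsetIr S J) (gH _ (subsetIl S J)))) => //.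
- by have := subxx (S :\: J); rewrite subsetD => /andP[].
- exact: leq_trans (subset_leq_card (subsetDl S J)) cS.
Qed.

Lemma sqn_fsum_approx_ge f g S k c :
  (forall j, j \in S -> inH P X j (f j)) -> (forall j, j \in S -> inH P X j (g j)) ->
  0 <= k -> 0 <= c <= 1 -> k <= sqn P X (fsum f S) ->
  sqn P X (fsum (fun j x => f j x - g j x) S) <= c * k ->
  (1 - Num.sqrt c) ^+ 2 * k <= sqn P X (fsum g S).
Proof.
move=> Hf Hg k0 c01 kf; apply: sqn_addr_small_ge => //.
- exact: in_L2_fsum.
- by apply: in_L2_fsum => j jS; apply: inH_sub; [exact: Hf | exact: Hg].
- have -> // : (fun x => fsum g S x + fsum (fun j x => f j x - g j x) S x) = fsum f S.
  by apply: funext => x; rewrite /fsum -big_split; apply: eq_bigr => j _ /=; rewrite addrC subrK.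
Qed.

Lemma sqn_fsum_residual_le f g S qs (eps' B : R) (a e : 'I_q -> R) (m : 'I_q -> nat) :
  (#|S| <= qs)%N -> (0 < qs)%N -> 0 < eps' -> 0 < B ->
  (forall J (h : 'I_q -> R -> R), (#|J| <= qs)%N ->
     (forall j, j \in J -> inH P X j (h j)) ->
     sqn P X (fsum h J) <= (1 + eps') * \sum_(j in J) sqn P X (liftj j (h j))) ->
  (forall j, j \in S -> 0 < a j) -> (forall j, j \in S -> 0 < e j) ->
  (forall j, j \in S -> (a j * qs%:R * (1 + eps') / B) `^ (1 / e j) <= (m j)%:R) ->
  (forall j, j \in S -> (1 <= m j)%N ->
     sqn P X (liftj j (fun x => f j x - g j x)) <= a j * (m j)%:R `^ (- e j)) ->
  (forall j, j \in S -> inH P X j (f j)) -> (forall j, j \in S -> inH P X j (g j)) ->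
  sqn P X (fsum (fun j x => f j x - g j x) S) <= B.
Proof.
move=> cS qs0 eps0 B0 RIP a0 e0 condL approx Hf Hg.
apply: le_trans (RIP S _ cS _) _.
  by move=> j jS; apply: inH_sub; [exact: Hf | exact: Hg].
apply: (sum_uniform_le (n := qs)); rewrite ?ltW // => j jS.
apply: approx_error_le (a0 j jS) _ B0 (e0 j jS) _ (approx j jS).
  by rewrite mulr_gt0 ?ltr0n // addr_gt0.
by rewrite mulrA; exact: condL.
Qed.

Lemma sqn_fsum_image_lbound f (E : set {set 'I_q}) :
  has_lbound [set sqn P X (fsum f J) | J in E]%classic.
Proof. by exists 0 => _ [J _ <-]; exact: sqn_ge0. Qed.

Lemma kappa_ge0 f : 0 <= kappa P X f.
Proof. by apply: inf_ge0 => _ [J _ <-]; exact: sqn_ge0. Qed.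

Lemma kappa_l_ge0 f l : 0 <= kappa_l P X f l.
Proof. by apply: inf_ge0 => _ [J _ <-]; exact: sqn_ge0. Qed.

Lemma kappa_l_le f J : J \subset J0 P X f -> kappa_l P X f #|J| <= sqn P X (fsum f J).
Proof. by move=> sJ; apply: (ge_inf (sqn_fsum_image_lbound _ _)); exists J. Qed.

Lemma kappa_le_kappa_l f J : J \subset J0 P X f -> J != finset.set0 ->
  kappa P X f <= kappa_l P X f #|J|.
Proof.
move=> sJ J0; apply: lb_le_inf; first by exists (sqn P X (fsum f J)), J.
move=> _ [J' [sJ' cJ'] <-]; apply: (ge_inf (sqn_fsum_image_lbound _ _)).
by exists J'; split => //; rewrite -card_gt0 cJ' card_gt0.
Qed.

Lemma sqn_fsum_gt0 f qs J : (forall j, inH P X j (f j)) -> (#|J0 P X f| <= qs)%N ->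
  0 < 1 - rho P X qs ^+ 2 -> J \subset J0 P X f -> J != finset.set0 ->
  0 < sqn P X (fsum f J).
Proof.
move=> Hf cJ0 rho_gap sJ /finset.set0Pn[j jJ].
have fj_gt0 : 0 < sqn P X (liftj j (f j)) by move: (fintype.subsetP sJ j jJ); rewrite inE.
have cJ : (#|J| <= qs)%N := leq_trans (subset_leq_card sJ) cJ0.
have -> : fsum f J = (fun x => liftj j (f j) x - fsum (fun i x => - f i x) (J :\ j) x).
  by apply: funext => x; rewrite /fsum (big_setD1 _ jJ) /= sumrN opprK.
have dJ : [disjoint [set j] & J :\ j] by rewrite disjoints1 setD11.
have c1 : (#|[set j]| <= qs)%N.
  by rewrite cards1 (leq_trans _ cJ) // card_gt0; apply/finset.set0Pn; exists j.
have c2 : (#|J :\ j| <= qs)%N := leq_trans (subset_leq_card (subD1set J j)) cJ.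
have fjH : inHJ P X [set j] (liftj j (f j)).
  exists f; split => [i _|]; first exact: Hf.
  by apply: funext => x; rewrite /fsum big_set1.
have restH : inHJ P X (J :\ j) (fsum (fun i x => - f i x) (J :\ j)).
  by exists (fun i x => - f i x); split => // i _; exact/inH_opp/Hf.
exact: lt_le_trans (mulr_gt0 rho_gap fj_gt0) (sqn_subr_ge_rho dJ c1 c2 fjH restH).
Qed.

Lemma kappa_gt0 f qs : (forall j, inH P X j (f j)) -> (#|J0 P X f| <= qs)%N ->
  0 < 1 - rho P X qs ^+ 2 -> J0 P X f != finset.set0 -> 0 < kappa P X f.
Proof.
move=> Hf cJ0 rho_gap J0n.
(* kappa is an infimum over finitely many positive values *)
pose mu := \big[Num.min/1]_(J : {set 'I_q} | (J \subset J0 P X f) && (J != finset.set0)) sqn P X (fsum f J).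
apply: (@lt_le_trans _ _ mu).
  by apply: lt_bigmin => // J /andP[sJ nJ]; exact: sqn_fsum_gt0 Hf cJ0 rho_gap sJ nJ.
apply: lb_le_inf; first by exists (sqn P X (fsum f (J0 P X f))), (J0 P X f).
by move=> _ [J [sJ nJ] <-]; apply: bigmin_le_cond; rewrite sJ nJ.
Qed.

Lemma sqn_fsum_proj_ge f g S qs (eps' c' : R) (a e : 'I_q -> R) (m : 'I_q -> nat) :
  S \subset J0 P X f -> S != finset.set0 -> (#|S| <= qs)%N -> 0 < eps' -> 0 < c' <= 1 ->
  0 < 1 - rho P X qs ^+ 2 -> 0 < kappa P X f ->
  (forall J (h : 'I_q -> R -> R), (#|J| <= qs)%N ->
     (forall j, j \in J -> inH P X j (h j)) ->
     sqn P X (fsum h J) <= (1 + eps') * \sum_(j in J) sqn P X (liftj j (h j))) ->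
  (forall j, j \in S -> 0 < a j) -> (forall j, j \in S -> 0 < e j) ->
  (forall j, j \in S -> (a j * qs%:R * (1 + eps')
     / (c' * (1 - rho P X qs ^+ 2) * kappa P X f)) `^ (1 / e j) <= (m j)%:R) ->
  (forall j, j \in S -> (1 <= m j)%N ->
     sqn P X (liftj j (fun x => f j x - g j x)) <= a j * (m j)%:R `^ (- e j)) ->
  (forall j, j \in S -> inH P X j (f j)) -> (forall j, j \in S -> inH P X j (g j)) ->
  (1 - Num.sqrt c') ^+ 2 * kappa_l P X f #|S| <= sqn P X (fsum g S).
Proof.
move=> sS Sn cS eps0 /andP[c0 c1] rho_gap kap_gt0 RIP a0 e0 condL approx fH gH.
have qs0 : (0 < qs)%N by apply: leq_trans cS; rewrite card_gt0.
have res_le := sqn_fsum_residual_le cS qs0 eps0 (mulr_gt0 (mulr_gt0 c0 rho_gap) kap_gt0)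
  RIP a0 e0 condL approx fH gH.
apply: (sqn_fsum_approx_ge fH gH (kappa_l_ge0 _ _) _ (kappa_l_le sS)).
  by rewrite ltW.
apply: le_trans res_le _; rewrite -mulrA; apply: ler_wpM2l; first exact: ltW.
have := kappa_le_kappa_l sS Sn; have : 0 <= rho P X qs ^+ 2 by rewrite sqr_ge0.
nra.
Qed.

Lemma vsqn_fsum_subr_ge (n : nat) (xs : 'I_n -> 'I_q -> R) qs delta m g (S J : {set 'I_q}) u :
  delta <= 1 -> (#|S| <= qs)%N -> (#|J| <= qs)%N ->
  (forall j, j \in S -> inV P X j (m j) (g j)) ->
  eventE P X xs delta m (J :|: S) -> SJ P X xs m J u ->
  (1 - delta) * ((1 - rho P X qs ^+ 2) * sqn P X (fsum g (S :\: J)))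
    <= vsqn (fun i => fsum g S (xs i) - u i).
Proof.
move=> d1 cS cJ Hg HE [H [HV uH]].
have gV : inVJ P X m S (fsum g S) by exists g.
have DV : inVJ P X m (J :|: S) (fun x => fsum g S x - H x).
  exact: inVJ_sub (inVJ_subset (finset.subsetUr J S) gV) (inVJ_subset (finset.subsetUl J S) HV).
apply: le_trans (ler_wpM2l _ (sqn_fsum_subr_ge_rho cS cJ Hg HV)) _.
  by rewrite subr_ge0.
suff -> : vsqn (fun i => fsum g S (xs i) - u i) = esqn xs (fun x => fsum g S x - H x).
  exact: (HE _ DV).1.
by rewrite /esqn /vsqn; congr (_ * _); apply: eq_bigr => i _; rewrite uH.
Qed.

End Model.

(** * Empirical projections *)

Section EmpiricalProjection.
Variables (R : realType) (n : nat).
Implicit Types (S : set ('I_n -> R)) (y u v w a b : 'I_n -> R).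

Lemma vsqn_ge0 a : 0 <= vsqn a.
Proof. by rewrite mulr_ge0 ?invr_ge0 // sumr_ge0 // => i _; rewrite sqr_ge0. Qed.

Lemma vsqn_eproj_pythagoras S y u : is_eproj S y u ->
  vsqn y = vsqn u + vsqn (fun i => y i - u i).
Proof.
case=> Su /(_ u Su) yu_orth; rewrite /vsqn -mulrDr -big_split /=; congr (_ * _).
transitivity (\sum_(i < n) (u i ^+ 2 + (y i - u i) ^+ 2 + 2 * ((y i - u i) * u i))).
  by apply: eq_bigr => i _; ring.
by rewrite big_split /= -mulr_sumr yu_orth mulr0 addr0.
Qed.

Lemma vsqn_eproj_min S y u v : is_eproj S y u -> S v ->
  vsqn (fun i => y i - u i) <= vsqn (fun i => y i - v i).
Proof.
case=> Su yu_orth Sv; apply: ler_wpM2l; first by rewrite invr_ge0.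
have -> : \sum_(i < n) (y i - v i) ^+ 2 = \sum_(i < n) ((y i - u i) ^+ 2 + (u i - v i) ^+ 2
    + 2 * ((y i - u i) * u i) - 2 * ((y i - u i) * v i)).
  by apply: eq_bigr => i _; ring.
rewrite sumrB !big_split /= -!mulr_sumr (yu_orth u Su) (yu_orth v Sv) !mulr0 subr0 addr0.
by rewrite lerDl sumr_ge0 // => i _; rewrite sqr_ge0.
Qed.

Lemma vsqn_addr_ge a b : 2 / 3 * vsqn a - 2 * vsqn b <= vsqn (fun i => a i + b i).
Proof.
rewrite /vsqn !mulrA -![_ * n%:R^-1]mulrC -!mulrA -mulrBr ler_wpM2l ?invr_ge0 //.
rewrite !mulr_sumr -sumrB; apply: ler_sum => i _.
have := sqr_ge0 (a i / 3 + b i); rewrite !expr2 => h; nra.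
Qed.

Lemma vsqn_eproj_gap_ge S0 S y u0 u w : is_eproj S0 y u0 -> is_eproj S y u -> S0 w ->
  2 / 3 * vsqn (fun i => w i - u i) - 3 * vsqn (fun i => y i - w i) <= vsqn u0 - vsqn u.
Proof.
move=> pu0 pu Sw; have := vsqn_addr_ge (fun i => w i - u i) (fun i => y i - w i).
have -> : (fun i => w i - u i + (y i - w i)) = (fun i => y i - u i).
  by apply: funext => i; ring.
have := vsqn_eproj_pythagoras pu0; have := vsqn_eproj_pythagoras pu.
have := vsqn_eproj_min pu0 Sw; lra.
Qed.

End EmpiricalProjection.
Theorem proposition6 (R : realType) (d : measure_display) (Omega : measurableType d)
  (P : probability Omega R) (q : nat) (X : 'I_q -> Omega -> R)
  (f : 'I_q -> R -> R) (qs : nat) (eps' : R)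
  (c : R) (p : 'I_q -> R -> R) (alpha K C : 'I_q -> R) (m : 'I_q -> nat)
  (c' delta : R) (J : {set 'I_q})
  (n : nat) (xs : 'I_n -> 'I_q -> R) (g : 'I_q -> R -> R) :
  (* the model *)
  (0 < q)%N ->
  (forall j, measurable_fun [set: Omega]%classic (X j)) ->
  (forall j, inH P X j (f j)) ->
  (#|J0 P X f| <= qs)%N ->
  (* Assumption 1 *)
  rho P X qs < 1 ->
  (* epsilon'_{q*} *)
  0 < eps' ->
  (forall (J' : {set 'I_q}) (h : 'I_q -> R -> R), (#|J'| <= qs)%N ->
     (forall j, j \in J' -> inH P X j (h j)) ->
     sqn P X (fsum h J') <= (1 + eps') * \sum_(j in J') sqn P X (liftj j (h j))) ->
  (* Assumption 2 *)
  0 < c ->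
  (forall j w, 0 <= X j w <= 1) ->
  (forall j, measurable_fun [set: R]%classic (p j)) ->
  (forall j (x : R), 0 <= x <= 1 -> c <= p j x <= 1 / c) ->
  (forall j (A : set R), measurable A ->
     P (X j @^-1` A)%classic =
     (\int[lebesgue_measure]_(x in (A `&` I01)%classic) (p j x)%:E)%E) ->
  (forall j, 1 / 2 < alpha j) ->
  (forall j, 0 < K j) ->
  (forall j, Wtilde (alpha j) (K j) (f j)) ->
  (* the approximation constants C_j *)
  (forall j, 0 < C j) ->
  (forall j (mm : nat) (h gg : R -> R), (1 <= mm)%N ->
     Wtilde (alpha j) (K j) h -> inH P X j h -> is_projV P X j mm h gg ->
     sqn P X (liftj j (fun x => h x - gg x))
       <= C j * K j ^+ 2 * (mm%:R) `^ (- (2 * alpha j)) /\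
     (forall x : R, 0 <= x <= 1 ->
        (h x - gg x) ^+ 2 <= C j * K j ^+ 2 * (mm%:R) `^ (1 - 2 * alpha j))) ->
  (* the remaining hypotheses *)
  J0 P X f != finset.set0 ->
  0 < delta < 1 ->
  0 < c' < 1 ->
  (forall j, (m j)%:R >=
     (C j * K j ^+ 2 * qs%:R * (1 + eps')
        / (c' * (1 - rho P X qs ^+ 2) * kappa P X f)) `^ (1 / (2 * alpha j))) ->
  2 / 3 * (1 - Num.sqrt c') ^+ 2 - 8 * ((1 + delta) / (1 - delta) ^+ 2) * c' >= 1 / 2 ->
  (#|J| <= qs)%N ->
  J0 P X f :\: J != finset.set0 ->
  (* the sample and the event E_{delta, J u J0} /\ A *)
  (0 < n)%N ->
  (forall i j, 0 <= xs i j <= 1) ->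
  eventE P X xs delta m (J :|: J0 P X f) ->
  (forall j, j \in J0 P X f -> is_projV P X j (m j) (f j) (g j)) ->
  esqn xs (fun x => fsum f [set: 'I_q]%SET x - fsum g (J0 P X f) x)
    <= 2 * c' * (1 - rho P X qs ^+ 2) * kappa P X f ->
  (* conclusion *)
  forall u0 u : 'I_n -> R,
    is_eproj (SJ P X xs m (J0 P X f)) (fun i => fsum f [set: 'I_q]%SET (xs i)) u0 ->
    is_eproj (SJ P X xs m J) (fun i => fsum f [set: 'I_q]%SET (xs i)) u ->
    vsqn u0 - vsqn u >=
      1 / 2 * ((1 - delta) ^+ 2 / (1 + delta)) * (1 - rho P X qs ^+ 2)
        * kappa_l P X f #|J0 P X f :\: J|.
Proof.
move=> _ mX Hf cJ0 _ eps0 RIP _ _ _ _ _ alpha_gt K_gt0 HW C_gt0 approx J0n delta01 /andP[c0 c1]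
  condL condC cJ J1n _ _ HE Hproj HA u0 u Hu0 Hu.
set J1 := J0 P X f :\: J.
have gV j : j \in J0 P X f -> inV P X j (m j) (g j) by case/Hproj.
have Sw : SJ P X xs m (J0 P X f) (fun i => fsum g (J0 P X f) (xs i)).
  by exists (fsum g (J0 P X f)); split => //; exists g.
apply: le_trans (vsqn_eproj_gap_ge Hu0 Hu Sw).
have Yw : vsqn (fun i => fsum f [set: 'I_q]%SET (xs i) - fsum g (J0 P X f) (xs i))
    <= 2 * c' * (1 - rho P X qs ^+ 2) * kappa P X f := HA.
have emp := vsqn_fsum_subr_ge mX (ltW (andP delta01).2) cJ0 cJ gV HE Hu.1.
rewrite -/J1 in emp.
(* Assumption 1 only bounds rho from above; for rho^2 >= 1 both sides are trivially signed. *)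
have [rho_le|rho_gap] := lerP (1 - rho P X qs ^+ 2) 0.
  exact: conditionC_bound_degenerate delta01 c0 rho_le (kappa_ge0 P X f)
    (kappa_l_ge0 P X f _) (vsqn_ge0 _) Yw.
have kap_gt0 := kappa_gt0 mX Hf cJ0 rho_gap J0n.
have sJ1 : J1 \subset J0 P X f := subsetDl _ _.
have gH j : j \in J1 -> inH P X j (g j) by move/(fintype.subsetP sJ1)/gV => [].
have A_ge : (1 - Num.sqrt c') ^+ 2 * kappa_l P X f #|J1| <= sqn P X (fsum g J1).
  apply: (sqn_fsum_proj_ge mX (a := fun j => C j * K j ^+ 2) (e := fun j => 2 * alpha j)
    sJ1 J1n (leq_trans (subset_leq_card sJ1) cJ0) eps0 _ rho_gap kap_gt0 RIP _ _
    (fun j _ => condL j) _ (fun j _ => Hf j) gH).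
  - by rewrite c0 ltW.
  - by move=> j _; rewrite mulr_gt0 ?exprn_gt0 ?C_gt0 ?K_gt0.
  - by move=> j _; have := alpha_gt j; lra.
  - move=> j /(fintype.subsetP sJ1) jJ0 m_ge1.
    exact: (approx j (m j) (f j) (g j) m_ge1 (HW j) (Hf j) (Hproj j jJ0)).1.
have kap_bounds : 0 <= kappa P X f <= kappa_l P X f #|J1|.
  by rewrite ltW //= kappa_le_kappa_l.
exact: conditionC_bound delta01 c0 rho_gap kap_bounds condC A_ge emp Yw.
Qed.
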